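(* Let $H$ be a binary Hamming code of length $n=2^k-1$ and let $\lambda:H\to\{0,1\}$ be a Boolean function with $\lambda(0^n)=0$ that is not linear. Let $V_H^\lambda=\{(x+y,\ |x|+\lambda(y),\ x)\mid x\in F^n,\ y\in H\}$. For $y'\in H$, the codeword $z=(y',\lambda(y'),0^n)$ belongs to $\mathrm{Tr}(V_H^\lambda)$ if and only if there exist $\pi\in \mathrm{Sym}(H)$ and $u\in F^n$ such that for all $y\in H$ $$\lambda(y')+\lambda(y)+\lambda(y'+\pi(y))=u\cdot y .$$
   Context: $F^n$ is the space of binary vectors of length $n$; $|x|=x_1+\dots+x_n\pmod 2$; $u\cdot y$ is the scalar product over $\mathbb{F}_2$. Permutations act on vectors by permuting coordinates. For a code $D\subseteq F^m$, $\mathrm{Sym}(D)=\{\pi\in S_m\mid \pi(D)=D\}$ and the translator is $\mathrm{Tr}(D)=\{z\in D\mid \exists \pi\in S_m:\ z+\pi(D)=D\}$. *)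

From mathcomp Require Import all_boot all_order all_algebra all_fingroup.
Set Implicit Arguments. Unset Strict Implicit. Unset Printing Implicit Defensive.
Import GRing.Theory.
Local Open Scope ring_scope.

Notation F2 := 'F_2.

Definition wt2 n (x : 'rV[F2]_n) : F2 := \sum_(i < n) x ord0 i.

Definition dot2 n (u y : 'rV[F2]_n) : F2 := \sum_(i < n) u ord0 i * y ord0 i.

Definition permv n (pi : {perm 'I_n}) (x : 'rV[F2]_n) : 'rV[F2]_n :=
  \row_(i < n) x ord0 ((pi^-1)%g i).

Definition permset n (pi : {perm 'I_n}) (D : {set 'rV[F2]_n}) : {set 'rV[F2]_n} :=
  [set permv pi d | d in D].

Definition in_Sym n (pi : {perm 'I_n}) (D : {set 'rV[F2]_n}) : Prop :=
  permset pi D = D.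

Definition in_Tr m (z : 'rV[F2]_m) (D : {set 'rV[F2]_m}) : Prop :=
  z \in D /\ exists pi : {perm 'I_m}, [set z + d | d in permset pi D] = D.

(* H is a binary Hamming code of length n = 2^k - 1: the kernel of a k x n
   parity-check matrix whose columns are pairwise distinct and nonzero
   (hence exactly all nonzero vectors of F^k). *)
Definition is_hamming_code (k n : nat) (H : {set 'rV[F2]_n}) : Prop :=
  n = (2 ^ k - 1)%N /\
  exists P : 'M[F2]_(k, n),
    (forall j, col j P != 0) /\ injective (fun j => col j P) /\
    H = [set x : 'rV[F2]_n | P *m x^T == 0].

Definition linear_on n (H : {set 'rV[F2]_n}) (lam : 'rV[F2]_n -> F2) : Prop :=
  forall y1 y2, y1 \in H -> y2 \in H -> lam (y1 + y2) = lam y1 + lam y2.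

Definition triple n (a : 'rV[F2]_n) (b : F2) (c : 'rV[F2]_n) : 'rV[F2]_(n + 1 + n) :=
  row_mx (row_mx a (b%:M)) c.

Definition VH n (H : {set 'rV[F2]_n}) (lam : 'rV[F2]_n -> F2) : {set 'rV[F2]_(n + 1 + n)} :=
  [set triple (x + y) (wt2 x + lam y) x | x in [set: 'rV[F2]_n], y in H].
Arguments is_hamming_code k n H : clear implicits.

From mathcomp Require Import all_boot all_order all_algebra all_fingroup.
Import GRing.Theory.
Local Open Scope ring_scope.
Set Implicit Arguments. Unset Strict Implicit.

(* A coordinate permutation s with z + s(V) = V preserves the dual code of
   V = V_H^lambda, and since lambda is not linear this dual is exactly
   {(p, 0, p) | p in H^perp}.  The columns of the parity-check matrix of H are
   distinct and nonzero, so these dual words tell apart precisely the middle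
   coordinate and the blocks formed by the i-th coordinates of the first and
   last parts.  Hence s fixes the middle coordinate and maps blocks to blocks:
   it is a permutation pi of the blocks followed by swaps inside the blocks
   where u_i = 1.  For such an s, z + s(x + y, |x| + lambda(y), x) lies in V
   iff y' + pi(y) is in H and lambda(y') + lambda(y) + lambda(y' + pi(y)) =
   u . y, which gives both directions. *)

Lemma addvv {V : lmodType 'F_2} (x : V) : x + x = 0.
Proof.
rewrite -mulr2n -scaler_nat.
have -> : 2%:R = 0 :> 'F_2 by apply/val_inj.
by rewrite scale0r.
Qed.

Lemma addF2 (a : 'F_2) : a + a = 0.
Proof. by case: a => [[|[|//]]] ?; apply/val_inj. Qed.

Lemma F2_cases (a : 'F_2) : a = 0 \/ a = 1.
Proof. by case: a => [[|[|//]]] ?; [left|right]; apply/val_inj. Qed.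

Lemma addF2_eq (a b c : 'F_2) : (a + b == c) = (a == c + b).
Proof. by apply/eqP/eqP => [<-|->]; rewrite -addrA addF2 addr0. Qed.

Section VectorFacts.
Variable n : nat.
Implicit Types (s : {perm 'I_n}) (u v w : 'rV['F_2]_n).

Lemma dot2D u v w : dot2 u (v + w) = dot2 u v + dot2 u w.
Proof. by rewrite /dot2 -big_split; apply: eq_bigr => i _; rewrite mxE mulrDr. Qed.

Lemma dot20 u : dot2 u 0 = 0.
Proof. by rewrite /dot2 big1 // => i _; rewrite mxE mulr0. Qed.

Lemma dot2_delta u i : dot2 u (delta_mx 0 i) = u ord0 i.
Proof.
rewrite /dot2 (bigD1 i) //= big1 ?addr0 => [|j /negPf ji]; rewrite mxE ?ji ?andbF ?mulr0 //.
by rewrite !eqxx mulr1.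
Qed.

Lemma wt2D v w : wt2 (v + w) = wt2 v + wt2 w.
Proof. by rewrite /wt2 -big_split; apply: eq_bigr => i _; rewrite mxE. Qed.

Lemma wt20 : wt2 (0 : 'rV['F_2]_n) = 0.
Proof. by rewrite /wt2 big1 // => i _; rewrite mxE. Qed.

Lemma wt2_map2_mul u v : wt2 (map2_mx *%R u v) = dot2 u v.
Proof. by apply: eq_bigr => i _; rewrite mxE. Qed.

Lemma permvE s v i : permv s v ord0 (s i) = v ord0 i.
Proof. by rewrite /permv mxE permK. Qed.

Lemma permvD s v w : permv s (v + w) = permv s v + permv s w.
Proof. by apply/rowP => i; rewrite !mxE. Qed.

Lemma permv_inj s : injective (permv s).
Proof. by move=> v w e; apply/rowP => i; rewrite -(permvE s v) -(permvE s w) e. Qed.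

Lemma permvK s v : permv s (permv (s^-1)%g v) = v.
Proof. by apply/rowP => i; rewrite !mxE invgK permKV. Qed.

Lemma dot2_permv s v w : dot2 (permv s v) (permv s w) = dot2 v w.
Proof.
by rewrite /dot2 (reindex_inj (@perm_inj _ s)); apply: eq_bigr => i _; rewrite !permvE.
Qed.

Lemma wt2_permv s v : wt2 (permv s v) = wt2 v.
Proof.
by rewrite /wt2 (reindex_inj (@perm_inj _ s)); apply: eq_bigr => i _; rewrite permvE.
Qed.

End VectorFacts.

Lemma imset_inj_subset_eq (T : finType) (f : T -> T) (A : {set T}) :
  injective f -> f @: A \subset A -> f @: A = A.
Proof. by move=> f_inj sub; apply/eqP; rewrite eqEcard sub card_imset //=. Qed.

Section TripleCoordinates.
Variable n : nat.
Local Notation N := (n + 1 + n)%N.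

Definition tleft (i : 'I_n) : 'I_N := lshift n (lshift 1 i).
Definition tmid : 'I_N := lshift n (rshift n ord0).
Definition tright (i : 'I_n) : 'I_N := rshift (n + 1) i.

Definition tcase T (fl : 'I_n -> T) (fm : T) (fr : 'I_n -> T) (t : 'I_N) : T :=
  match split t with
  | inl t1 => if split t1 is inl i then fl i else fm
  | inr i => fr i
  end.

Section TcaseEquations.
Variables (T : Type) (fl : 'I_n -> T) (fm : T) (fr : 'I_n -> T).

Lemma tcaseL i : tcase fl fm fr (tleft i) = fl i.
Proof. by rewrite /tcase (unsplitK (inl (lshift 1 i))) (unsplitK (inl i)). Qed.

Lemma tcaseM : tcase fl fm fr tmid = fm.
Proof. by rewrite /tcase (unsplitK (inl (rshift n ord0))) (unsplitK (inr ord0)). Qed.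

Lemma tcaseR i : tcase fl fm fr (tright i) = fr i.
Proof. by rewrite /tcase (unsplitK (inr i)). Qed.

End TcaseEquations.

Definition tcaseE := (tcaseL, tcaseM, tcaseR).

Variant tidx_spec : 'I_N -> Type :=
  | TidxLeft i : tidx_spec (tleft i)
  | TidxMid : tidx_spec tmid
  | TidxRight i : tidx_spec (tright i).

Lemma tidxP t : tidx_spec t.
Proof.
rewrite -[t]splitK; case: (split t) => [t1|i]; last exact: TidxRight.
rewrite -[t1]splitK; case: (split t1) => [i|j]; first exact: TidxLeft.
by rewrite ord1; exact: TidxMid.
Qed.

Lemma tleft_neq_tright i j : tleft i != tright j.
Proof. by rewrite eq_lrshift. Qed.

Lemma tmid_neq_tleft i : tmid != tleft i.
Proof. by rewrite /tmid /tleft (inj_eq (@lshift_inj _ _)) eq_rlshift. Qed.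

Implicit Types (a c p : 'rV['F_2]_n) (b : 'F_2).

Lemma tripleE a b c t :
  triple a b c ord0 t = tcase (fun i => a ord0 i) b (fun i => c ord0 i) t.
Proof.
case: (tidxP t) => [i||i]; rewrite ?tcaseE /triple.
- by rewrite !row_mxEl.
- by rewrite row_mxEl row_mxEr mxE.
- by rewrite row_mxEr.
Qed.

Lemma triple_left a b c i : triple a b c ord0 (tleft i) = a ord0 i.
Proof. by rewrite tripleE tcaseL. Qed.

Lemma triple_mid a b c : triple a b c ord0 tmid = b.
Proof. by rewrite tripleE tcaseM. Qed.

Lemma triple_right a b c i : triple a b c ord0 (tright i) = c ord0 i.
Proof. by rewrite tripleE tcaseR. Qed.

Lemma triple_inj a b c a' b' c' :
  triple a b c = triple a' b' c' -> [/\ a = a', b = b' & c = c'].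
Proof.
move=> e; split; first (apply/rowP => i; by rewrite -(triple_left a b c i) e triple_left);
  last (apply/rowP => i; by rewrite -(triple_right a b c i) e triple_right).
by rewrite -(triple_mid a b c) e triple_mid.
Qed.

Lemma triple_eta (v : 'rV['F_2]_N) :
  v = triple (\row_i v ord0 (tleft i)) (v ord0 tmid) (\row_i v ord0 (tright i)).
Proof.
apply/rowP => t; rewrite tripleE.
by case: (tidxP t) => [i||i]; rewrite ?tcaseE ?mxE.
Qed.

Lemma triple_add a b c a' b' c' :
  triple a b c + triple a' b' c' = triple (a + a') (b + b') (c + c').
Proof.
apply/rowP => t; rewrite mxE !tripleE.
by case: (tidxP t) => [i||i]; rewrite ?tcaseE ?mxE.
Qed.

Lemma triple0 : triple 0 0 0 = 0 :> 'rV['F_2]_N.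
Proof.
apply/rowP => t; rewrite tripleE mxE.
by case: (tidxP t) => [i||i]; rewrite ?tcaseE ?mxE.
Qed.

Lemma dot2_triple a b c p b' q :
  dot2 (triple p b' q) (triple a b c) = dot2 p a + b' * b + dot2 q c.
Proof.
rewrite /dot2 !big_split_ord big_ord1 /=.
by rewrite -[lshift _ (rshift _ _)]/tmid !triple_mid; congr (_ + _ + _);
  apply: eq_bigr => i _; rewrite ?triple_left ?triple_right.
Qed.

End TripleCoordinates.
Arguments tmid {n}.

Section BlockPermutations.
Variable n : nat.
Local Notation N := (n + 1 + n)%N.

Definition tblock : 'I_N -> option 'I_n := tcase Some None Some.

Definition tpartner : 'I_N -> 'I_N := tcase (@tright n) (@tmid n) (@tleft n).

Lemma tblock_eq t t' : tblock t = tblock t' -> t' = t \/ t' = tpartner t.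
Proof.
rewrite /tblock /tpartner.
case: (tidxP t) => [i||i]; case: (tidxP t') => [j||j];
  rewrite ?tcaseE // => e;
  first [by left | by case: e => ->; by [left|right]].
Qed.

Lemma tblock_mid : tblock tmid = None.
Proof. exact: tcaseM. Qed.

Lemma tblock_None t : tblock t = None -> t = tmid.
Proof. by rewrite /tblock; case: (tidxP t) => [i||i]; rewrite ?tcaseE. Qed.

Lemma tblock_partner t : tblock (tpartner t) = tblock t.
Proof.
by rewrite /tblock /tpartner; case: (tidxP t) => [i||i]; rewrite ?tcaseE.
Qed.

Lemma tpartner_fix t : tpartner t = t -> t = tmid.
Proof.
rewrite /tpartner; case: (tidxP t) => [i||i]; rewrite ?tcaseE //.
  by move/eqP; rewrite eq_sym (negPf (tleft_neq_tright _ _)).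
by move/eqP; rewrite (negPf (tleft_neq_tright _ _)).
Qed.

Definition bperm_fun (pi : {perm 'I_n}) (u : 'rV['F_2]_n) : 'I_N -> 'I_N :=
  tcase (fun i => if u ord0 i == 1 then tright (pi i) else tleft (pi i)) tmid
        (fun i => if u ord0 i == 1 then tleft (pi i) else tright (pi i)).

Lemma bperm_funK pi u :
  cancel (bperm_fun pi u) (bperm_fun (pi^-1)%g (\row_j u ord0 ((pi^-1)%g j))).
Proof.
move=> t; rewrite /bperm_fun.
case: (tidxP t) => [i||i]; rewrite ?tcaseE //;
  by case: ifP => ui; rewrite ?tcaseE mxE permK ui.
Qed.

Definition bperm pi u : {perm 'I_N} := perm (can_inj (bperm_funK pi u)).

Section BpermEquations.
Variables (pi : {perm 'I_n}) (u : 'rV['F_2]_n).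

Lemma bperm_left i :
  bperm pi u (tleft i) = if u ord0 i == 1 then tright (pi i) else tleft (pi i).
Proof. by rewrite permE /bperm_fun tcaseL. Qed.

Lemma bperm_mid : bperm pi u tmid = tmid.
Proof. by rewrite permE /bperm_fun tcaseM. Qed.

Lemma bperm_right i : bperm pi u (tright i) = tpartner (bperm pi u (tleft i)).
Proof.
by rewrite bperm_left permE /bperm_fun tcaseR /tpartner; case: ifP; rewrite ?tcaseE.
Qed.

Lemma permv_bperm a b c (d := map2_mx *%R u (a + c)) :
  permv (bperm pi u) (triple a b c) = triple (permv pi (a + d)) b (permv pi (c + d)).
Proof.
apply/rowP => t; rewrite -[t](permKV (bperm pi u)) permvE.
case: (tidxP ((bperm pi u)^-1%g t)) => [i||i];
  rewrite ?bperm_right ?bperm_left ?bperm_mid ?triple_mid //.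
all: case: (F2_cases (u ord0 i)) => ui;
  rewrite ui ?eqxx ?(eq_sym 0) ?oner_eq0 /tpartner ?tcaseE.
all: rewrite ?triple_left ?triple_right permvE !mxE ui ?mul0r ?mul1r ?addr0 //.
  by rewrite addrCA addF2 addr0.
by rewrite addrA addF2 add0r.
Qed.

End BpermEquations.
End BlockPermutations.

Section TranslatedCode.
Variables (n : nat) (H : {set 'rV['F_2]_n}) (lam : 'rV['F_2]_n -> 'F_2).

Lemma mem_VH a b c :
  (triple a b c \in VH H lam) = (a + c \in H) && (b == wt2 c + lam (a + c)).
Proof.
apply/imset2P/andP => [[x y _ yH /triple_inj [-> -> ->]] | [acH /eqP ->]].
  by rewrite addrAC addvv add0r.
by exists c (a + c); rewrite ?inE // addrCA addvv addr0.
Qed.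

Lemma triple_lam_mem y : y \in H -> triple y (lam y) 0 \in VH H lam.
Proof. by move=> yH; rewrite mem_VH addr0 wt20 add0r yH eqxx. Qed.

Lemma mem_translate_bperm y' (pi : {perm 'I_n}) u a b c :
  triple a b c \in VH H lam ->
  (triple y' (lam y') 0 + permv (bperm pi u) (triple a b c) \in VH H lam) =
  (y' + permv pi (a + c) \in H) &&
  (lam y' + lam (a + c) + lam (y' + permv pi (a + c)) == dot2 u (a + c)).
Proof.
rewrite mem_VH => /andP [_ /eqP ->]; rewrite permv_bperm triple_add add0r mem_VH.
set y := a + c; set d := map2_mx _ u y.
have -> : y' + permv pi (a + d) + permv pi (c + d) = y' + permv pi y.
  by rewrite -addrA -permvD addrACA addvv addr0.
rewrite wt2_permv wt2D wt2_map2_mul addrCA -addrA (inj_eq (addrI _)).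
by rewrite -[X in _ && X]addF2_eq.
Qed.

End TranslatedCode.

Definition perp m (S : {set 'rV['F_2]_m}) (w : 'rV['F_2]_m) : Prop :=
  forall v, v \in S -> dot2 w v = 0.

Definition perp_agree m (S : {set 'rV['F_2]_m}) (t t' : 'I_m) : Prop :=
  forall w, perp S w -> w ord0 t = w ord0 t'.

Section PerpInvariance.
Variables (m : nat) (S : {set 'rV['F_2]_m}) (s : {perm 'I_m}).

Lemma perp_permv_translator z : 0 \in S -> z \in S ->
  [set z + d | d in permset s S] = S -> forall w, perp S (permv s w) <-> perp S w.
Proof.
move=> S0 Sz eS.
have memS v : v \in S -> exists2 v1, v1 \in S & v = z + permv s v1.
  by rewrite -{1}eS => /imsetP [_ /imsetP [v1 Sv1 ->] ->]; exists v1.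
have [v0 Sv0 e0] := memS 0 S0.
have ez : permv s v0 = z by rewrite -[permv s v0]add0r e0 -addrA addvv addr0.
move=> w; split=> wS v Sv.
  rewrite -(dot2_permv s).
  have -> : permv s v = z + (z + permv s v) by rewrite addrA addvv add0r.
  rewrite dot2D (wS _ Sz) add0r; apply: wS.
  by rewrite -eS; do 2 apply: imset_f.
by case/memS: Sv => v1 Sv1 ->; rewrite dot2D -{1}ez !dot2_permv !wS ?addr0.
Qed.

Lemma perp_agree_perm : (forall w, perp S (permv s w) <-> perp S w) ->
  forall t t', perp_agree S (s t) (s t') <-> perp_agree S t t'.
Proof.
move=> Sinv t t'; split=> agree w wS.
  by rewrite -!(permvE s w); apply/agree/Sinv.
by rewrite -[w](permvK s) !permvE; apply/agree/Sinv; rewrite permvK.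
Qed.

End PerpInvariance.

Definition ocoord n (p : 'rV['F_2]_n) (o : option 'I_n) : 'F_2 := oapp (fun i => p ord0 i) 0 o.

Lemma triple_p0p_ocoord n (p : 'rV['F_2]_n) t : triple p 0 p ord0 t = ocoord p (tblock t).
Proof. by rewrite tripleE /tblock; case: (tidxP t) => [i||i]; rewrite ?tcaseE. Qed.

Section DualOfVH.
Variables (n : nat) (H : {set 'rV['F_2]_n}) (lam : 'rV['F_2]_n -> 'F_2).
Hypotheses (Hadd : addr_closed H) (lam0 : lam 0 = 0) (nonlin : ~ linear_on H lam).

Lemma perp_VH w : perp (VH H lam) w <-> exists2 p, perp H p & w = triple p 0 p.
Proof.
split=> [wV | [p pH ->] v]; last first.
  rewrite [v]triple_eta mem_VH => /andP [acH _].
  by rewrite dot2_triple mul0r addr0 -dot2D pH.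
pose p := \row_i w ord0 (tleft i); pose q := \row_i w ord0 (tright i).
pose b := w ord0 tmid.
have ew : w = triple p b q := triple_eta w.
rewrite ew in wV *.
have lamP y : y \in H -> dot2 p y + b * lam y = 0.
  by move=> yH; rewrite -(wV _ (triple_lam_mem lam yH)) dot2_triple dot20 addr0.
have wtP x : dot2 p x + b * wt2 x + dot2 q x = 0.
  rewrite -dot2_triple; apply: wV.
  by rewrite mem_VH addvv lam0 addr0 eqxx Hadd.1.
have b0 : b = 0.
  case: (F2_cases b) => // b1; case: nonlin => y1 y2 y1H y2H.
  have lamE y : y \in H -> lam y = dot2 p y.
    by move=> yH; rewrite -[lam y]add0r -(lamP y yH) b1 mul1r -addrA addF2 addr0.
  by rewrite !lamE ?dot2D //; exact: Hadd.2.
have pq : p = q.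
  apply/rowP => i; rewrite -[p ord0 i]add0r -(wtP (delta_mx 0 i)).
  by rewrite b0 mul0r addr0 !dot2_delta addrAC addF2 add0r.
exists p; last by rewrite b0 pq.
by move=> y yH; rewrite -(lamP y yH) b0 mul0r addr0.
Qed.

Hypothesis sep : forall o o' : option 'I_n, o != o' ->
  exists2 p, perp H p & ocoord p o != ocoord p o'.

Lemma perp_agree_VH t t' : perp_agree (VH H lam) t t' <-> tblock t = tblock t'.
Proof.
split=> [agree | eblk w /perp_VH [p _ ->]]; last by rewrite !triple_p0p_ocoord eblk.
apply/eqP; apply: contraT => /sep [p pH]; rewrite -!triple_p0p_ocoord agree ?eqxx //.
by apply/perp_VH; exists p.
Qed.

End DualOfVH.

Section HammingCode.
Variables (k n : nat) (H : {set 'rV['F_2]_n}).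
Hypothesis hH : is_hamming_code k n H.

Lemma hamming_addr_closed : addr_closed H.
Proof.
case: hH => _ [P [_ [_ ->]]]; split; first by rewrite inE trmx0 mulmx0.
by move=> y1 y2; rewrite !inE linearD mulmxDr => /eqP -> /eqP ->; rewrite addr0.
Qed.

Lemma hamming_perp_separates (o o' : option 'I_n) :
  o != o' -> exists2 p, perp H p & ocoord p o != ocoord p o'.
Proof.
case: hH => _ [P [col_nz [col_inj ->]]] neq.
pose ocol o := oapp (fun i => col i P) 0 o.
have ocol_neq : ocol o != ocol o'.
  case: o o' neq => [i|] [j|] //= ij; last by rewrite eq_sym col_nz.
  by apply: contra ij => /eqP /col_inj ->.
have [r ne_r] : exists r, ocol o r ord0 != ocol o' r ord0.
  apply/existsP; move: ocol_neq; apply: contraNT => /existsPn agree.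
  by apply/eqP/colP => r; apply/eqP/negPn/agree.
exists (row r P).
  move=> y; rewrite inE => /eqP /matrixP /(_ r ord0); rewrite !mxE => <-.
  by apply: eq_bigr => j _; rewrite !mxE.
by case: o o' {neq ocol_neq} ne_r => [i|] [j|]; rewrite /ocol /ocoord /= !mxE.
Qed.

End HammingCode.

Lemma tblock_preserving_bperm n (s : {perm 'I_(n + 1 + n)}) :
  (forall t t', tblock (s t) = tblock (s t') <-> tblock t = tblock t') ->
  exists pi u, s = bperm pi u.
Proof.
move=> sblk.
have s_mid : s tmid = tmid.
  have e : (s^-1)%g (tpartner (s tmid)) = tmid.
    by apply/tblock_None; rewrite -tblock_mid; apply/sblk; rewrite permKV tblock_partner.
  by move/(congr1 s): e; rewrite permKV; exact: tpartner_fix.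
have s_left i : exists j, tblock (s (tleft i)) = Some j.
  case e: (tblock (s (tleft i))) => [j|]; first by exists j.
  move/tblock_None: e; rewrite -s_mid => /perm_inj /eqP.
  by rewrite eq_sym (negPf (tmid_neq_tleft i)).
pose f i := odflt i (tblock (s (tleft i))).
have fE i : tblock (s (tleft i)) = Some (f i) by rewrite /f; case: (s_left i) => j ->.
have f_inj : injective f.
  move=> i i' e; have /sblk : tblock (s (tleft i)) = tblock (s (tleft i')) by rewrite !fE e.
  by rewrite /tblock !tcaseE => -[].
pose pi := perm f_inj.
pose u := \row_i (s (tleft i) == tright (pi i))%:R : 'rV['F_2]_n.
have s_left' i : s (tleft i) = bperm pi u (tleft i).
  rewrite bperm_left mxE.
  have [|->|->] := tblock_eq (t := tleft (pi i)) (t' := s (tleft i)).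
  - by rewrite fE /tblock tcaseE permE.
  - by rewrite (negPf (tleft_neq_tright _ _)).
  - by rewrite /tpartner tcaseL eqxx.
have s_right i : s (tright i) = tpartner (s (tleft i)).
  have [||//] := tblock_eq (t := s (tleft i)) (t' := s (tright i)).
  - by apply/sblk; rewrite /tblock !tcaseE.
  - by move/perm_inj/eqP; rewrite eq_sym (negPf (tleft_neq_tright _ _)).
exists pi, u; apply/permP => t.
by case: (tidxP t) => [i||i]; rewrite ?bperm_mid ?s_mid ?bperm_right ?s_right ?s_left'.
Qed.

Lemma translator_bperm k n (H : {set 'rV['F_2]_n}) lam (s : {perm 'I_(n + 1 + n)}) y' :
  is_hamming_code k n H -> lam 0 = 0 -> ~ linear_on H lam -> y' \in H ->
  [set triple y' (lam y') 0 + d | d in permset s (VH H lam)] = VH H lam ->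
  exists pi u, s = bperm pi u.
Proof.
move=> hH lam0 nonlin y'H eS; apply: tblock_preserving_bperm.
have Hadd := hamming_addr_closed hH.
have agreeE := perp_agree_VH Hadd lam0 nonlin (hamming_perp_separates hH).
have V0 : 0 \in VH H lam by rewrite -triple0 mem_VH addr0 wt20 lam0 addr0 eqxx Hadd.1.
have Sinv := perp_permv_translator V0 (triple_lam_mem lam y'H) eS.
by move=> t t'; split=> /agreeE /(perp_agree_perm Sinv) /agreeE.
Qed.

Unset Implicit Arguments.

Theorem corollary1 (k n : nat) (H : {set 'rV['F_2]_n}) (lam : 'rV['F_2]_n -> 'F_2)
  (hH : is_hamming_code k n H) (hlam0 : lam 0 = 0) (hnl : ~ @linear_on n H lam)
  (y' : 'rV['F_2]_n) (hy' : y' \in H) :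
  in_Tr (triple y' (lam y') 0) (VH H lam) <->
  exists (pi : {perm 'I_n}) (u : 'rV['F_2]_n),
    in_Sym pi H /\
    forall y, y \in H -> lam y' + lam y + lam (y' + permv pi y) = dot2 u y.
Proof.
have Hadd := hamming_addr_closed hH.
set z := triple y' (lam y') 0.
have translateE s : [set z + d | d in permset s (VH H lam)] =
                    (fun v => z + permv s v) @: VH H lam by rewrite -imset_comp.
split=> [[_ [s eS]] | [pi [u [piH lamE]]]].
  have [pi [u es]] := translator_bperm hH hlam0 hnl hy' eS; rewrite {s}es in eS.
  have key y : y \in H -> (y' + permv pi y \in H) &&
                 (lam y' + lam y + lam (y' + permv pi y) == dot2 u y).
    move=> yH; have := mem_translate_bperm y' pi u (triple_lam_mem lam yH).
    rewrite addr0 => <-; rewrite -eS translateE.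
    by apply: imset_f; exact: triple_lam_mem.
  exists pi, u; split=> [|y /key /andP [_ /eqP //]].
  apply: imset_inj_subset_eq (@permv_inj _ pi) _; apply/subsetP => _ /imsetP [y yH ->].
  have /andP [y'yH _] := key y yH.
  have -> : permv pi y = y' + (y' + permv pi y) by rewrite addrA addvv add0r.
  exact: Hadd.2.
split; first exact: triple_lam_mem.
exists (bperm pi u); rewrite translateE; apply: imset_inj_subset_eq.
  by move=> v w /addrI /permv_inj.
apply/subsetP => _ /imsetP [v vV ->]; move: vV; rewrite [v]triple_eta => vV.
rewrite mem_translate_bperm //; move: vV; rewrite mem_VH => /andP [acH _].
rewrite lamE // eqxx andbT; apply: Hadd.2 hy' _.
by rewrite -piH imset_f.
Qed.
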